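(* Let $z_0\in\mathbb{B}^2$, $t>0$ and $r=e^t$. Then the Hilbert circle $\partial B_h(z_0,t)=\{z\in\mathbb{B}^2: h_{\mathbb{B}^2}(z_0,z)=t\}$ is exactly the set of $z\in\mathbb{C}$ satisfying $$\overline{z_0}^2rz^2-\big((r^2+1)|z_0|^2-(r+1)^2\big)z\overline{z}+z_0^2r\overline{z}^2-4\overline{z_0}rz-4z_0r\overline{z}+(r+1)^2|z_0|^2-(r-1)^2=0,$$ and this set is a Euclidean ellipse contained in $\mathbb{B}^2$.
   Context: $\mathbb{B}^2$ is the open unit disk in $\mathbb{C}$. For distinct $x,y\in\mathbb{B}^2$ the Hilbert metric is $h_{\mathbb{B}^2}(x,y)=\log\frac{|u-y||x-v|}{|u-x||y-v|}$, where $u,v$ are the intersection points of the line through $x,y$ with the unit circle, labelled so that $|u-x|<|u-y|$; also $h_{\mathbb{B}^2}(x,x)=0$. $B_h(z_0,t)=\{z\in\mathbb{B}^2:h_{\mathbb{B}^2}(z_0,z)<t\}$. *)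

From Stdlib Require Import Reals ClassicalEpsilon.
From Coquelicot Require Import Coquelicot.
Open Scope R_scope.

Definition hilbert_ends (x y u v : C) : Prop :=
  Cmod u = 1 /\ Cmod v = 1 /\ u <> v /\
  (exists a : R, u = Cplus x (Cmult (RtoC a) (Cminus y x))) /\
  (exists b : R, v = Cplus x (Cmult (RtoC b) (Cminus y x))) /\
  Cmod (Cminus u x) < Cmod (Cminus u y).

Definition hilbert (x y : C) : R :=
  if excluded_middle_informative (x = y) then 0
  else let p := epsilon (inhabits (RtoC 0, RtoC 0))
                        (fun p : C * C => hilbert_ends x y (fst p) (snd p)) in
       let u := fst p in let v := snd p in
       ln ((Cmod (Cminus u y) * Cmod (Cminus x v)) /
           (Cmod (Cminus u x) * Cmod (Cminus y v))).

Definition circle_eq (z0 : C) (r : R) (z : C) : C :=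
  let z0c := Cconj z0 in let zc := Cconj z in
  let m2 := Cmod z0 ^ 2 in
  Cplus (Cplus (Cplus (Cplus (Cplus (Cplus
    (Cmult (Cmult (Cmult z0c z0c) (RtoC r)) (Cmult z z))
    (Copp (Cmult (RtoC ((r ^ 2 + 1) * m2 - (r + 1) ^ 2)) (Cmult z zc))))
    (Cmult (Cmult (Cmult z0 z0) (RtoC r)) (Cmult zc zc)))
    (Copp (Cmult (Cmult (RtoC 4) (Cmult z0c (RtoC r))) z)))
    (Copp (Cmult (Cmult (RtoC 4) (Cmult z0 (RtoC r))) zc)))
    (RtoC ((r + 1) ^ 2 * m2)))
    (Copp (RtoC ((r - 1) ^ 2))).

(* A (non-degenerate) Euclidean ellipse: foci f1 f2 and constant 2a > |f1 - f2|;
   circles are the case f1 = f2. *)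
Definition is_ellipse (S : C -> Prop) : Prop :=
  exists (f1 f2 : C) (a : R), Cmod (Cminus f1 f2) < 2 * a /\
    forall z, S z <-> Cmod (Cminus z f1) + Cmod (Cminus z f2) = 2 * a.

From Stdlib Require Import Reals Lra Psatz ClassicalEpsilon.
From Coquelicot Require Import Coquelicot.
Open Scope R_scope.

(* The chord through x <> y, parametrised as s |-> x + s (y - x), meets the unit
   circle at the roots a < 0 < 1 < b of a quadratic, so h(x, y) = ln (N / M) with
   N = (1 - a) b and M = (-a) (b - 1).  By Vieta's formulas the real form of the
   circle equation at (x, y) equals |y - x|^4 (r N - M) (N - r M), and r N > M, so it
   vanishes exactly when N / M = r = e^t.  For the ellipse, squaring
   |z - f1| + |z - f2| = 2a twice gives a quartic that factors over the four sign
   choices; for foci z0 (al +- i lam) with suitable al, lam, a it is a negative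
   multiple of the same real form. *)

Definition cdot (z w : C) : R := fst z * fst w + snd z * snd w.

Lemma Cmod_sqr (z : C) : Cmod z ^ 2 = cdot z z.
Proof.
  destruct z as [p q]; unfold Cmod, cdot; cbn [fst snd].
  rewrite pow2_sqrt; [ring | nra].
Qed.

Lemma Cmod_lt_1 (z : C) : Cmod z < 1 <-> cdot z z < 1.
Proof.
  rewrite <- Cmod_sqr; pose proof (Cmod_ge_0 z); split; intro; nra.
Qed.

Lemma RtoC_eq_0 (k : R) : RtoC k = RtoC 0 <-> k = 0.
Proof. split; [apply RtoC_inj | now intros ->]. Qed.

Definition circle_form (r : R) (z0 z : C) : R :=
  4 * r * (1 - cdot z0 z) ^ 2 - (r + 1) ^ 2 * (1 - cdot z0 z0) * (1 - cdot z z).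

Lemma circle_eq_RtoC (z0 : C) (r : R) (z : C) :
  circle_eq z0 r z = RtoC (circle_form r z0 z).
Proof.
  unfold circle_eq; rewrite Cmod_sqr.
  destruct z0 as [p q], z as [x y].
  unfold circle_form, cdot, Cminus, Cplus, Cmult, Copp, Cconj, RtoC; cbn [fst snd].
  f_equal; ring.
Qed.

Lemma circle_form_root_in_disk (r : R) (z0 z : C) :
  0 < r -> Cmod z0 < 1 -> circle_form r z0 z = 0 -> Cmod z < 1.
Proof.
  rewrite !Cmod_lt_1; destruct z0 as [p q], z as [x y]; unfold circle_form, cdot; cbn [fst snd].
  intros Hr Hz0 H.
  destruct (Rlt_le_dec (x * x + y * y) 1) as [|Hz]; [assumption | exfalso].
  assert (Hc : 0 < (r + 1) ^ 2 * (1 - (p * p + q * q))) by nra.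
  assert (Hneg : (r + 1) ^ 2 * (1 - (p * p + q * q)) * (1 - (x * x + y * y)) <= 0).
  { apply Rmult_le_0_l; lra. }
  assert (Hs : (1 - (p * x + q * y)) ^ 2 = 0).
  { pose proof (pow2_ge_0 (1 - (p * x + q * y))). nra. }
  assert (Hdot : p * x + q * y = 1).
  { destruct (Req_dec (p * x + q * y) 1) as [| Hne]; [assumption |].
    exfalso; apply (pow_nonzero (1 - (p * x + q * y)) 2); lra. }
  assert (Hn : x * x + y * y = 1) by nra.
  (* Lagrange's identity, i.e. Cauchy-Schwarz: (z0.z)^2 <= |z0|^2 |z|^2 < 1 *)
  assert (Hcs : (p * x + q * y) ^ 2 + (p * y - q * x) ^ 2 = (p * p + q * q) * (x * x + y * y))
    by ring.
  rewrite Hdot, Hn in Hcs; pose proof (pow2_ge_0 (p * y - q * x)); lra.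
Qed.

Lemma cdot_minus_r (x y z : C) : cdot x (Cminus y z) = cdot x y - cdot x z.
Proof.
  destruct x as [p q], y as [c e], z as [g h].
  unfold cdot, Cminus, Cplus, Copp; cbn [fst snd]; ring.
Qed.

Lemma quad_vieta (D k c a b : R) :
  a <> b -> D * a ^ 2 + 2 * k * a + c = 0 -> D * b ^ 2 + 2 * k * b + c = 0 ->
  D * (a + b) = - 2 * k /\ D * (a * b) = c.
Proof.
  intros Hab Ha Hb.
  assert (Hs : D * (a + b) = - 2 * k).
  { apply (Rmult_eq_reg_r (a - b)); [nra | lra]. }
  split; [exact Hs | nra].
Qed.

Lemma quad_roots_exist (D k c : R) :
  0 < D -> c < 0 ->
  exists a b, a < b /\ D * a ^ 2 + 2 * k * a + c = 0 /\ D * b ^ 2 + 2 * k * b + c = 0.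
Proof.
  intros HD Hc.
  set (s := sqrt (k ^ 2 - D * c)).
  assert (Hs : 0 < s) by (apply sqrt_lt_R0; nra).
  assert (Hroot : forall e, e ^ 2 = k ^ 2 - D * c ->
                   D * ((- k + e) / D) ^ 2 + 2 * k * ((- k + e) / D) + c = 0).
  { intros e He. replace (D * ((- k + e) / D) ^ 2 + 2 * k * ((- k + e) / D) + c)
      with ((e ^ 2 - (k ^ 2 - D * c)) / D) by (field; lra).
    rewrite He; unfold Rdiv; ring. }
  assert (Hs2 : s ^ 2 = k ^ 2 - D * c) by (apply pow2_sqrt; nra).
  exists ((- k + - s) / D), ((- k + s) / D); repeat split.
  - apply Rmult_lt_compat_r; [apply Rinv_0_lt_compat |]; lra.
  - apply Hroot; rewrite <- Hs2; ring.
  - apply Hroot, Hs2.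
Qed.

Definition chord_pt (x y : C) (s : R) : C := Cplus x (Cmult (RtoC s) (Cminus y x)).

Lemma chord_pt_0 (x y : C) : chord_pt x y 0 = x.
Proof. unfold chord_pt; ring. Qed.

Lemma chord_pt_1 (x y : C) : chord_pt x y 1 = y.
Proof. unfold chord_pt; ring. Qed.

Lemma Cmod_chord_pt_sub (x y : C) (s s' : R) :
  Cmod (Cminus (chord_pt x y s) (chord_pt x y s')) = Rabs (s - s') * Cmod (Cminus y x).
Proof.
  replace (Cminus (chord_pt x y s) (chord_pt x y s')) with (Cmult (RtoC (s - s')) (Cminus y x))
    by (unfold chord_pt; rewrite RtoC_minus; ring).
  now rewrite Cmod_mult, Cmod_R.
Qed.

Lemma Cmod_chord_pt_sqr (x y : C) (s : R) :
  Cmod (chord_pt x y s) ^ 2 =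
  Cmod (Cminus y x) ^ 2 * s ^ 2 + 2 * cdot x (Cminus y x) * s + cdot x x.
Proof.
  rewrite !Cmod_sqr; destruct x as [p q], y as [c e].
  unfold chord_pt, cdot, Cplus, Cmult, Cminus, Copp, RtoC; cbn [fst snd]; ring.
Qed.

Lemma hilbert_diag (x : C) : hilbert x x = 0.
Proof. unfold hilbert; destruct (excluded_middle_informative (x = x)) as [_ | []]; reflexivity. Qed.

Lemma ln_eq_iff (u t : R) : 0 < u -> ln u = t <-> u = exp t.
Proof. intro Hu; split; intro H; [rewrite <- H, exp_ln | rewrite H, ln_exp]; auto. Qed.

(* [a] and [b] are the two roots, given by Vieta's relations, of
   [s |-> |chord_pt x y s|^2 - 1] (see [Cmod_chord_pt_sqr]). *)
Definition chord_roots (x y : C) (a b : R) : Prop :=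
  Cmod (Cminus y x) ^ 2 * (a + b) = - 2 * cdot x (Cminus y x) /\
  Cmod (Cminus y x) ^ 2 * (a * b) = cdot x x - 1.

Section Chord.

Variables x y : C.
Hypotheses (Hxy : x <> y) (Hx : Cmod x < 1) (Hy : Cmod y < 1).

Let L := Cmod (Cminus y x).
Let k := cdot x (Cminus y x).

Lemma chord_length_pos : 0 < L.
Proof. apply Cmod_gt_0, Cminus_eq_contra; auto. Qed.

Lemma Cmod_chord_pt_sub_ends (s : R) :
  Cmod (Cminus (chord_pt x y s) x) = Rabs s * L /\
  Cmod (Cminus (chord_pt x y s) y) = Rabs (1 - s) * L /\
  Cmod (Cminus x (chord_pt x y s)) = Rabs s * L /\
  Cmod (Cminus y (chord_pt x y s)) = Rabs (1 - s) * L.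
Proof.
  pose proof (Cmod_chord_pt_sub x y s 0) as Hsx; pose proof (Cmod_chord_pt_sub x y s 1) as Hsy.
  pose proof (Cmod_chord_pt_sub x y 0 s) as Hxs; pose proof (Cmod_chord_pt_sub x y 1 s) as Hys.
  rewrite chord_pt_0 in Hsx, Hxs; rewrite chord_pt_1 in Hsy, Hys.
  rewrite Hsx, Hsy, Hxs, Hys, Rminus_0_r, Rminus_0_l, Rabs_Ropp, (Rabs_minus_sym s 1).
  repeat split.
Qed.

Lemma chord_pt_on_circle (s : R) :
  Cmod (chord_pt x y s) = 1 <-> L ^ 2 * s ^ 2 + 2 * k * s + (cdot x x - 1) = 0.
Proof.
  pose proof (Cmod_chord_pt_sqr x y s); pose proof (Cmod_ge_0 (chord_pt x y s)).
  fold L k in H; split; intro; nra.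
Qed.

Lemma chord_roots_straddle (a b : R) :
  chord_roots x y a b -> a * b < 0 /\ (1 - a) * (1 - b) < 0.
Proof.
  intros [Hs Hp]; fold L k in Hs, Hp.
  pose proof chord_length_pos.
  pose proof (Cmod_chord_pt_sqr x y 1) as Hy2; rewrite chord_pt_1 in Hy2; fold L k in Hy2.
  apply Cmod_lt_1 in Hx; pose proof (Cmod_ge_0 y).
  assert (Hq : L ^ 2 * ((1 - a) * (1 - b)) = Cmod y ^ 2 - 1).
  { replace (L ^ 2 * ((1 - a) * (1 - b))) with (L ^ 2 - L ^ 2 * (a + b) + L ^ 2 * (a * b))
      by ring.
    rewrite Hs, Hp, Hy2; ring. }
  split; nra.
Qed.

Lemma hilbert_ends_chord_roots (u v : C) :
  hilbert_ends x y u v ->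
  exists a b, u = chord_pt x y a /\ v = chord_pt x y b /\ a < 0 /\ 1 < b /\ chord_roots x y a b.
Proof.
  intros (Hu & Hv & Huv & [a ->] & [b ->] & Hlab).
  fold (chord_pt x y a) (chord_pt x y b) in *.
  exists a, b; split; [reflexivity | split; [reflexivity |]].
  assert (Hab : a <> b) by (intros ->; auto).
  assert (Hroots : chord_roots x y a b).
  { apply chord_pt_on_circle in Hu, Hv. exact (quad_vieta _ _ _ _ _ Hab Hu Hv). }
  destruct (chord_roots_straddle a b Hroots) as [Hab0 Hab1].
  pose proof chord_length_pos.
  destruct (Cmod_chord_pt_sub_ends a) as (Hax & Hay & _); rewrite Hax, Hay in Hlab.
  assert (Ha : a < 1 / 2).
  { apply (Rmult_lt_reg_r L) in Hlab; [|assumption].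
    apply Rsqr_lt_abs_1 in Hlab; unfold Rsqr in Hlab; nra. }
  assert (Ha0 : a < 0).
  { destruct (Rlt_le_dec a 0) as [|Ha0]; [assumption | exfalso].
    assert (b < 0) by nra. nra. }
  split; [| split; [| exact Hroots]]; nra.
Qed.

Lemma hilbert_ends_exist : exists uv : C * C, hilbert_ends x y (fst uv) (snd uv).
Proof.
  pose proof chord_length_pos as HL.
  destruct (quad_roots_exist (L ^ 2) k (cdot x x - 1)) as (a & b & Hab & Ha & Hb).
  { nra. }
  { apply Cmod_lt_1 in Hx; lra. }
  assert (Hroots : chord_roots x y a b) by exact (quad_vieta _ _ _ _ _ (Rlt_not_eq _ _ Hab) Ha Hb).
  destruct (chord_roots_straddle a b Hroots) as [Hab0 _].
  assert (Ha0 : a < 0) by nra.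
  exists (chord_pt x y a, chord_pt x y b); cbn [fst snd].
  refine (conj _ (conj _ (conj _ (conj (ex_intro _ a eq_refl) (conj (ex_intro _ b eq_refl) _))))).
  - now apply chord_pt_on_circle.
  - now apply chord_pt_on_circle.
  - intro Heq. pose proof (Cmod_chord_pt_sub x y a b) as Hd.
    rewrite Heq in Hd.
    replace (Cminus (chord_pt x y b) (chord_pt x y b)) with (RtoC 0) in Hd by ring.
    rewrite Cmod_0, Rabs_left in Hd by lra; fold L in Hd; nra.
  - destruct (Cmod_chord_pt_sub_ends a) as (-> & -> & _).
    rewrite Rabs_left, Rabs_right by lra; nra.
Qed.

Lemma hilbert_cross_ratio :
  exists a b, a < 0 /\ 1 < b /\ chord_roots x y a b /\
    hilbert x y = ln ((1 - a) * b / ((- a) * (b - 1))).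
Proof.
  pose proof (epsilon_spec (inhabits (RtoC 0, RtoC 0))
    (fun uv : C * C => hilbert_ends x y (fst uv) (snd uv)) hilbert_ends_exist) as Hends.
  destruct (hilbert_ends_chord_roots _ _ Hends) as (a & b & Hu & Hv & Ha & Hb & Hroots).
  exists a, b; do 3 (split; [assumption |]).
  unfold hilbert; destruct (excluded_middle_informative (x = y)); [contradiction |].
  cbv zeta; rewrite Hu, Hv.
  destruct (Cmod_chord_pt_sub_ends a) as (-> & -> & _).
  destruct (Cmod_chord_pt_sub_ends b) as (_ & _ & -> & ->).
  rewrite (Rabs_left a), (Rabs_right (1 - a)), (Rabs_right b), (Rabs_left (1 - b)) by lra.
  pose proof chord_length_pos.
  f_equal; field; repeat split; lra.
Qed.

Lemma circle_form_chord_roots (r a b : R) :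
  chord_roots x y a b ->
  circle_form r x y = L ^ 4 * (r * ((1 - a) * b) - (- a) * (b - 1))
                            * ((1 - a) * b - r * ((- a) * (b - 1))).
Proof.
  intros [Hs Hp]; fold L k in Hs, Hp.
  pose proof (Cmod_chord_pt_sqr x y 1) as Hy2; rewrite chord_pt_1, Cmod_sqr in Hy2; fold L k in Hy2.
  assert (Hxy' : cdot x y = cdot x x + k) by (unfold k; rewrite cdot_minus_r; ring).
  unfold circle_form; rewrite Hxy', Hy2.
  replace k with (- (L ^ 2 * (a + b)) / 2) by lra.
  replace (cdot x x) with (L ^ 2 * (a * b) + 1) by lra.
  field.
Qed.

End Chord.

Lemma hilbert_eq_iff_circle_form (x y : C) (t : R) :
  Cmod x < 1 -> Cmod y < 1 -> 0 < t ->
  hilbert x y = t <-> circle_form (exp t) x y = 0.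
Proof.
  intros Hx Hy Ht.
  assert (Hr : 1 < exp t) by (rewrite <- exp_0; apply exp_increasing; lra).
  destruct (excluded_middle_informative (x = y)) as [<- | Hxy].
  - assert (Hd : circle_form (exp t) x x = - ((exp t - 1) * (1 - cdot x x)) ^ 2)
      by (unfold circle_form; ring).
    apply Cmod_lt_1 in Hx.
    rewrite hilbert_diag, Hd; split; intro H; [lra | exfalso].
    apply (pow_nonzero ((exp t - 1) * (1 - cdot x x)) 2); [nra | lra].
  - destruct (hilbert_cross_ratio x y Hxy Hx Hy) as (a & b & Ha & Hb & Hroots & ->).
    rewrite (circle_form_chord_roots x y (exp t) a b Hroots).
    set (N := (1 - a) * b); set (M := - a * (b - 1)).
    assert (HM : 0 < M) by (unfold M; apply Rmult_lt_0_compat; lra).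
    assert (HNM : M < N) by (unfold M, N; nra).
    pose proof (chord_length_pos x y Hxy) as HL.
    assert (HrN : 0 < Cmod (Cminus y x) ^ 4 * (exp t * N - M))
      by (apply Rmult_lt_0_compat; [apply pow_lt; lra | nra]).
    rewrite ln_eq_iff by (apply Rdiv_lt_0_compat; lra).
    transitivity (N = exp t * M).
    + split; intro H; [rewrite <- H | rewrite H]; field; lra.
    + split; intro H; [rewrite H; ring | nra].
Qed.

Definition ellipse_quadric (f1 f2 : C) (a : R) (z : C) : R :=
  let P1 := Cmod (Cminus z f1) ^ 2 in
  let P2 := Cmod (Cminus z f2) ^ 2 in
  (P1 - P2) ^ 2 - 8 * a ^ 2 * (P1 + P2) + 16 * a ^ 4.

Lemma ellipse_quadric_eq_0_iff (f1 f2 : C) (a : R) (z : C) :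
  Cmod (Cminus f1 f2) < 2 * a ->
  Cmod (Cminus z f1) + Cmod (Cminus z f2) = 2 * a <-> ellipse_quadric f1 f2 a z = 0.
Proof.
  intros Hf.
  set (s1 := Cmod (Cminus z f1)); set (s2 := Cmod (Cminus z f2)).
  assert (0 <= s1) by apply Cmod_ge_0; assert (0 <= s2) by apply Cmod_ge_0.
  pose proof (Cmod_ge_0 (Cminus f1 f2)).
  assert (Hs1 : s1 <= s2 + Cmod (Cminus f1 f2)).
  { unfold s1, s2; rewrite <- (Cmod_opp (Cminus f1 f2)).
    replace (Cminus z f1) with (Cplus (Cminus z f2) (Copp (Cminus f1 f2))) by ring.
    apply Cmod_triangle. }
  assert (Hs2 : s2 <= s1 + Cmod (Cminus f1 f2)).
  { unfold s1, s2.
    replace (Cminus z f2) with (Cplus (Cminus z f1) (Cminus f1 f2)) by ring.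
    apply Cmod_triangle. }
  assert (Hq : ellipse_quadric f1 f2 a z = ((s1 + s2) ^ 2 - 4 * a ^ 2) * ((s1 - s2) ^ 2 - 4 * a ^ 2))
    by (unfold ellipse_quadric; fold s1 s2; ring).
  assert (Hneg : (s1 - s2) ^ 2 - 4 * a ^ 2 < 0) by nra.
  rewrite Hq; split; intro Hs; [rewrite Hs; ring |].
  apply Rmult_integral in Hs as [Hs | Hs]; [| lra].
  assert (Hf0 : (s1 + s2 - 2 * a) * (s1 + s2 + 2 * a) = 0) by (rewrite <- Hs; ring).
  apply Rmult_integral in Hf0 as [Hf0 | Hf0]; lra.
Qed.

Lemma is_ellipse_ext (S T : C -> Prop) :
  (forall z, S z <-> T z) -> is_ellipse S -> is_ellipse T.
Proof.
  intros HST (f1 & f2 & a & Hf & HS).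
  exists f1, f2, a; split; [exact Hf |].
  intro z; rewrite <- HST; apply HS.
Qed.

Lemma ellipse_quadric_conj_foci (z0 : C) (al lam a : R) (z : C) :
  ellipse_quadric (Cmult z0 (al, lam)) (Cmult z0 (al, - lam)) a z =
  16 * (lam ^ 2 * (cdot z0 z0 * cdot z z - cdot z0 z ^ 2)
        - a ^ 2 * (cdot z z - 2 * al * cdot z0 z + cdot z0 z0 * (al ^ 2 + lam ^ 2))
        + (a ^ 2) ^ 2).
Proof.
  unfold ellipse_quadric; rewrite !Cmod_sqr.
  destruct z0 as [p q], z as [x y].
  unfold cdot, Cminus, Cplus, Cmult, Copp; cbn [fst snd]; ring.
Qed.

Lemma Cmod_conj_foci_sub_sqr (z0 : C) (al lam : R) :
  Cmod (Cminus (Cmult z0 (al, lam)) (Cmult z0 (al, - lam))) ^ 2 = 4 * lam ^ 2 * cdot z0 z0.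
Proof.
  rewrite Cmod_sqr; destruct z0 as [p q].
  unfold cdot, Cminus, Cplus, Cmult, Copp; cbn [fst snd]; ring.
Qed.

Lemma circle_form_is_ellipse (r : R) (z0 : C) :
  1 < r -> Cmod z0 < 1 -> is_ellipse (fun z => circle_form r z0 z = 0).
Proof.
  intros Hr Hz0; apply Cmod_lt_1 in Hz0.
  assert (Hm : 0 <= cdot z0 z0) by (unfold cdot; nra).
  set (m := cdot z0 z0) in *.
  set (A := 4 * r * m + (r + 1) ^ 2 * (1 - m)).
  assert (HA : 4 * r * m < A) by (unfold A; nra).
  assert (HA0 : 0 < A) by nra.
  assert (Hc : 0 < (r - 1) ^ 2 * (1 - m)) by (apply Rmult_lt_0_compat; [apply pow_lt |]; lra).
  (* the foci z0 (4r/A +- i lam) and the constant a are forced by matching the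
     coefficients in [ellipse_quadric_conj_foci] with those of [circle_form] *)
  set (a := sqrt ((r - 1) ^ 2 * (1 - m) / A)).
  set (lam := sqrt (4 * r * a ^ 2 / A)).
  assert (Ha2 : a ^ 2 = (r - 1) ^ 2 * (1 - m) / A) by (apply pow2_sqrt, Rdiv_le_0_compat; lra).
  assert (Ha : 0 < a) by (apply sqrt_lt_R0, Rdiv_lt_0_compat; lra).
  assert (Hl2 : lam ^ 2 = 4 * r * a ^ 2 / A) by (apply pow2_sqrt, Rdiv_le_0_compat; nra).
  assert (Hl : 0 < lam) by (apply sqrt_lt_R0, Rdiv_lt_0_compat; nra).
  set (f1 := Cmult z0 (4 * r / A, lam)); set (f2 := Cmult z0 (4 * r / A, - lam)).
  assert (Hf : Cmod (Cminus f1 f2) < 2 * a).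
  { pose proof (Cmod_conj_foci_sub_sqr z0 (4 * r / A) lam) as Hd; fold f1 f2 m in Hd.
    rewrite Hl2 in Hd.
    assert (Hlt : 4 * (4 * r * a ^ 2 / A) * m < (2 * a) ^ 2).
    { apply (Rmult_lt_reg_r A); [lra |].
      replace (4 * (4 * r * a ^ 2 / A) * m * A) with (a ^ 2 * (16 * r * m)) by (field; lra).
      assert (0 < a ^ 2) by (apply pow_lt; lra).
      nra. }
    pose proof (Cmod_ge_0 (Cminus f1 f2)); nra. }
  exists f1, f2, a; split; [exact Hf |].
  intro z; rewrite (ellipse_quadric_eq_0_iff _ _ _ _ Hf).
  assert (Hq : ellipse_quadric f1 f2 a z = - (4 * lam ^ 2 / r) * circle_form r z0 z).
  { unfold f1, f2; rewrite ellipse_quadric_conj_foci, Hl2, Ha2.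
    unfold circle_form; fold m; unfold A; field; nra. }
  rewrite Hq; split; intro H; [rewrite H; ring |].
  apply Rmult_integral in H as [H | H]; [| exact H].
  assert (0 < 4 * lam ^ 2 / r) by (apply Rdiv_lt_0_compat; nra).
  lra.
Qed.

Theorem mainTheorem7 (z0 : C) (t : R) :
  Cmod z0 < 1 -> 0 < t ->
  (forall z : C,
     (Cmod z < 1 /\ hilbert z0 z = t) <-> circle_eq z0 (exp t) z = RtoC 0) /\
  is_ellipse (fun z => circle_eq z0 (exp t) z = RtoC 0) /\
  (forall z : C, circle_eq z0 (exp t) z = RtoC 0 -> Cmod z < 1).
Proof.
  intros Hz0 Ht.
  assert (Hr : 1 < exp t) by (rewrite <- exp_0; apply exp_increasing; lra).
  assert (Hform : forall z, circle_eq z0 (exp t) z = RtoC 0 <-> circle_form (exp t) z0 z = 0)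
    by (intro z; rewrite circle_eq_RtoC; apply RtoC_eq_0).
  assert (Hdisk : forall z, circle_eq z0 (exp t) z = RtoC 0 -> Cmod z < 1).
  { intros z Hz%Hform; apply (circle_form_root_in_disk (exp t) z0); [lra | assumption..]. }
  split; [| split; [| exact Hdisk]].
  - intro z; split.
    + intros [Hz Hh]; apply Hform, hilbert_eq_iff_circle_form; assumption.
    + intro Hz; pose proof (Hdisk z Hz) as Hz1.
      split; [exact Hz1 | apply hilbert_eq_iff_circle_form, Hform; assumption].
  - apply (is_ellipse_ext (fun z => circle_form (exp t) z0 z = 0)).
    + intro z; symmetry; apply Hform.
    + exact (circle_form_is_ellipse _ _ Hr Hz0).
Qed.
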